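(* Let $\mathbb{R}^n_s$ be $\mathbb{R}^n$ with a non-degenerate symmetric bilinear form of signature $(n-s,s)$, and let $G\subset\mathrm{Iso}(\mathbb{R}^n_s)$ be a real Zariski-closed subgroup whose centralizer in $\mathrm{Iso}(\mathbb{R}^n_s)$ acts transitively on $\mathbb{R}^n$. Then the action of $G$ on $\mathbb{R}^n$ is principal.
   Context: The action of $G$ on $\mathbb{R}^n$ is free. A free action of an algebraic group $G$ on an affine variety $V$ is principal if the map $G\times V\to V\times V$, $(g,x)\mapsto(g.x,x)$ is an algebraic isomorphism onto its image; equivalently, the map $\beta(y,x)=g_{yx}$, where $g_{yx}\in G$ is the unique element with $g_{yx}.x=y$, defined on the graph $\{(g.x,x)\}$ of the action, is a morphism. *)

From HB Require Import structures.
From mathcomp Require Import all_boot all_order all_algebra.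
From mathcomp Require Import reals.
From mathcomp Require Import mpoly.

Set Implicit Arguments. Unset Strict Implicit. Unset Printing Implicit Defensive.
Import Order.TTheory GRing.Theory Num.Theory.
Local Open Scope ring_scope.

Section Defs.
Variables (R : realType) (n s : nat).

Definition sigform : 'M[R]_n :=
  \matrix_(i < n, j < n) (if i == j then (if (i < n - s)%N then 1 else -1) else 0).

(* An affine map x |-> A x + b of R^n, represented by the pair (A, b). *)
Definition aff := ('M[R]_n * 'cV[R]_n)%type.

Definition act (g : aff) (x : 'cV[R]_n) : 'cV[R]_n := g.1 *m x + g.2.

Definition aff_comp (g h : aff) : aff := (g.1 *m h.1, g.1 *m h.2 + g.2).

Definition aff_id : aff := (1%:M, 0).

Definition isIso (g : aff) : Prop := g.1^T *m sigform *m g.1 = sigform.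

Definition aff_coords (g : aff) : 'I_(n * n + n) -> R :=
  fun k => match split k with
           | inl j => mxvec g.1 0 j
           | inr j => g.2 j 0
           end.

Definition pair_coords (y x : 'cV[R]_n) : 'I_(n + n) -> R :=
  fun k => match split k with
           | inl j => y j 0
           | inr j => x j 0
           end.

Definition is_subgroup_Iso (G : aff -> Prop) : Prop :=
  [/\ forall g, G g -> isIso g,
      G aff_id,
      forall g h, G g -> G h -> G (aff_comp g h) &
      forall g, G g -> exists2 h, G h & aff_comp g h = aff_id].

Definition zariski_closed (G : aff -> Prop) : Prop :=
  exists P : {mpoly R[n * n + n]} -> Prop,
    forall g, G g <-> forall p, P p -> p.@[aff_coords g] = 0.

Definition centralizer_transitive (G : aff -> Prop) : Prop :=
  forall x y : 'cV[R]_n, exists h, [/\ isIso h,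
      forall g, G g -> aff_comp h g = aff_comp g h &
      act h x = y].

Definition free_action (G : aff -> Prop) : Prop :=
  forall g x, G g -> act g x = x -> g = aff_id.

Definition regular_on (m : nat) (S : ('I_m -> R) -> Prop) (f : ('I_m -> R) -> R) :=
  exists p q : {mpoly R[m]},
    forall z, S z -> q.@[z] != 0 /\ f z = p.@[z] / q.@[z].

Definition principal_action (G : aff -> Prop) : Prop :=
  free_action G /\
  exists beta : ('I_(n + n) -> R) -> aff,
    (forall g x, G g -> beta (pair_coords (act g x) x) = g) /\
    let Gamma := fun z => exists g x, G g /\ z = pair_coords (act g x) x in
    (forall i j : 'I_n, regular_on Gamma (fun z => (beta z).1 i j)) /\
    (forall i : 'I_n, regular_on Gamma (fun z => (beta z).2 i 0)).

End Defs.

From HB Require Import structures.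
From mathcomp Require Import all_boot all_order all_algebra.
From mathcomp Require Import boolp reals.
From mathcomp Require Import mpoly.

(* Let h commute with G and send 0 to x.  Then g.x - x = h.(g.0) - h.0 = h.1 g.2
   for every g in G, with h.1 invertible: the displacement of g at any point is
   an invertible linear image of its translation part.  Two consequences follow.
   First, a fixed point of g is carried everywhere by the centralizer, so the
   action is free.  Second, choose g_1, ..., g_k in G whose translation parts
   form a basis of the span of all translation parts; if g.0 = sum mu_l g_l.0
   then g and 1 + sum mu_l (g_l - 1) have the same displacement everywhere, so
   they are equal.  At a point (y, x) of the graph the displacements
   g_l.x - x are independent and span y - x, so mu is recovered by least
   squares, mu = (y - x)^T Q^T (Q Q^T)^-1 with Q the matrix of displacements at
   x: a rational function of (y, x) whose denominator det (Q Q^T) never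
   vanishes. *)

Set Implicit Arguments. Unset Strict Implicit. Unset Printing Implicit Defensive.
Import Order.TTheory GRing.Theory Num.Theory.
Local Open Scope ring_scope.

Lemma row_free_col_mx (F : fieldType) m n (B : 'M[F]_(m, n)) (v : 'rV[F]_n) :
  row_free B -> ~~ (v <= B)%MS -> row_free (col_mx B v).
Proof.
move=> /eqP rkB vB; rewrite /row_free eqn_leq rank_leq_row /=.
rewrite [X in (X <= _)%N]addn1 -[X in X.+1]rkB; apply: rank_ltmx.
by rewrite ltmxE col_mx_sub submx_refl vB -addsmxE addsmxSl.
Qed.

Section AffineMaps.
Variables (R : realType) (n : nat).
Implicit Types (g h : aff R n) (x : 'cV[R]_n).

Lemma act_comp g h x : act (aff_comp g h) x = act g (act h x).
Proof. by rewrite /act /aff_comp /= mulmxDr mulmxA addrA. Qed.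

Lemma act_inj g h : act g =1 act h -> g = h.
Proof.
move=> e; have e2 : g.2 = h.2 by have := e 0; rewrite /act !mulmx0 !add0r.
have e1 : g.1 = h.1.
  apply/matrixP=> i j; have := e (delta_mx j 0); rewrite /act e2 => /addIr.
  by rewrite -!colE => /(congr1 (fun v : 'cV_n => v i 0)); rewrite !mxE.
by case: g h {e} e1 e2 => [A b] [A' b'] /= -> ->.
Qed.

Definition aff_comb k (gs : 'I_k -> aff R n) (mu : 'rV[R]_k) : aff R n :=
  (1%:M + \sum_l mu 0 l *: ((gs l).1 - 1%:M), \sum_l mu 0 l *: (gs l).2).

Definition transl_mx k (gs : 'I_k -> aff R n) : 'M[R]_(k, n) :=
  \matrix_l (gs l).2^T.

Definition disp_mx k (gs : 'I_k -> aff R n) x : 'M[R]_(k, n) :=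
  \matrix_l (act (gs l) x - x)^T.

Lemma disp_mx_comb k (gs : 'I_k -> aff R n) mu x :
  (act (aff_comb gs mu) x - x)^T = mu *m disp_mx gs x.
Proof.
rewrite mulmx_sum_row; under [RHS]eq_bigr => l _ do rewrite rowK -linearZ.
rewrite -linear_sum /act /aff_comb /= mulmxDl mul1mx addrAC [x + _]addrC addrK.
rewrite mulmx_suml -big_split /=; congr _^T; apply: eq_bigr => l _.
by rewrite -scalemxAl -scalerDr mulmxBl mul1mx addrAC.
Qed.

Lemma aff_comb1E k (gs : 'I_k -> aff R n) mu i j :
  (aff_comb gs mu).1 i j = (i == j)%:R + \sum_l mu 0 l * ((gs l).1 i j - (i == j)%:R).
Proof.
rewrite /= !mxE summxE; congr (_ + _); apply: eq_bigr => l _.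
by rewrite !mxE.
Qed.

Lemma aff_comb2E k (gs : 'I_k -> aff R n) mu i :
  (aff_comb gs mu).2 i 0 = \sum_l mu 0 l * (gs l).2 i 0.
Proof. by rewrite /= summxE; apply: eq_bigr => l _; rewrite mxE. Qed.

Lemma translation_basis (G : aff R n -> Prop) :
  exists k (gs : 'I_k -> aff R n), [/\ forall i, G (gs i), row_free (transl_mx gs) &
    forall g, G g -> exists mu, g.2^T = mu *m transl_mx gs].
Proof.
pose P k :=
  `[< exists gs : 'I_k -> aff R n, (forall i, G (gs i)) /\ row_free (transl_mx gs) >].
have P0 : exists k, P k.
  exists 0%N; apply/asboolP; exists (fun=> aff_id R n); split; first by case.
  by rewrite /row_free -leqn0 rank_leq_row.
have Pn k : P k -> (k <= n)%N by move=> /asboolP[gs [_ /eqP <-]]; apply: rank_leq_col.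
case: (ex_maxnP P0 Pn) => m /asboolP[gs [Ggs free_gs]] max_m.
exists m, gs; split=> // g Gg; apply/submxP; apply: contraT => gs_g.
suff /max_m : P (m + 1)%N by rewrite addn1 ltnn.
pose ext (i : 'I_(m + 1)) := if split i is inl j then gs j else g.
apply/asboolP; exists ext; split; first by move=> i; rewrite /ext; case: split.
suff -> : transl_mx ext = col_mx (transl_mx gs) g.2^T by apply: row_free_col_mx.
apply/row_matrixP => i; rewrite rowK -[i]splitK /ext unsplitK.
by case: (split i) => j /=; rewrite ?rowKu ?rowKd ?rowK ?row_id.
Qed.

End AffineMaps.

Section Isometries.
Variables (R : realType) (n s : nat).

Lemma sigform_sq : sigform R n s *m sigform R n s = 1%:M.
Proof.
apply/matrixP=> i j; rewrite !mxE (bigD1 i) //= big1 => [|k nki]; last first.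
  by rewrite !mxE eq_sym (negbTE nki) mul0r.
rewrite !mxE eqxx addr0; case: eqP => [->|_]; last by rewrite mulr0.
by case: ifP => _; rewrite ?mulr1 ?mulrNN ?mulr1.
Qed.

Lemma isIso_unitmx (g : aff R n) : isIso s g -> g.1 \in unitmx.
Proof.
move=> iso_g.
suff /mulmx1_unit[] : (sigform R n s *m g.1^T *m sigform R n s) *m g.1 = 1%:M by [].
by rewrite -!mulmxA (mulmxA g.1^T) iso_g sigform_sq.
Qed.

End Isometries.

Section LeastSquares.
Variables (R : realFieldType) (k n : nat).

Lemma mul_tr_eq0 (w : 'rV[R]_n) : w *m w^T = 0 -> w = 0.
Proof.
move=> /(congr1 (fun M : 'M_1 => M 0 0)); rewrite !mxE => ww0; apply/rowP => j.
have /psumr_eq0P/(_ j isT) : \sum_l w 0 l * w 0 l = 0.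
  by rewrite -[RHS]ww0; apply: eq_bigr => l _; rewrite mxE.
by move=> /(_ (fun l _ => sqr_ge0 _))/eqP; rewrite mulf_eq0 orbb mxE => /eqP.
Qed.

Lemma row_free_mul_tr_unit (Q : 'M[R]_(k, n)) : row_free Q -> Q *m Q^T \in unitmx.
Proof.
move=> /row_freeP[B QB]; rewrite -row_free_unit -kermx_eq0; apply/eqP.
apply/row_matrixP => i; rewrite row0; set v := row i _.
have vQQ : v *m (Q *m Q^T) = 0 by rewrite /v -row_mul mulmx_ker row0.
have vQ : v *m Q = 0.
  by apply: mul_tr_eq0; rewrite trmx_mul mulmxA -(mulmxA v) vQQ mul0mx.
by rewrite -[v]mulmx1 -QB mulmxA vQ mul0mx.
Qed.

Lemma least_squares_coef (Q : 'M[R]_(k, n)) (mu : 'rV[R]_k) :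
  row_free Q -> mu *m Q *m Q^T *m invmx (Q *m Q^T) = mu.
Proof. by move=> /row_free_mul_tr_unit QQu; rewrite -(mulmxA mu) mulmxK. Qed.

End LeastSquares.

Section CentralizerTransitive.
Variables (R : realType) (n s : nat) (G : aff R n -> Prop).
Hypothesis cent_trans : centralizer_transitive s G.

Lemma centralizer_transitive_free : free_action G.
Proof.
move=> g x Gg gx; apply: act_inj => y; rewrite [RHS]/act mul1mx addr0.
have [h [_ hg <-]] := cent_trans x y.
by rewrite -act_comp -hg // act_comp gx.
Qed.

Lemma disp_linear x : exists2 C : 'M[R]_n, C \in unitmx &
  forall g, G g -> act g x - x = C *m g.2.
Proof.
have [h [iso_h hg <-]] := cent_trans 0 x; exists h.1; first exact: isIso_unitmx iso_h.
by move=> g Gg; rewrite -act_comp -hg // act_comp /act !mulmx0 !add0r addrK.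
Qed.

Lemma disp_mx_transl k (gs : 'I_k -> aff R n) x (C : 'M[R]_n) :
  (forall i, G (gs i)) -> (forall g, G g -> act g x - x = C *m g.2) ->
  disp_mx gs x = transl_mx gs *m C^T.
Proof.
move=> Ggs dispC; apply/row_matrixP => l.
by rewrite row_mul !rowK dispC // trmx_mul.
Qed.

Lemma row_free_disp_mx k (gs : 'I_k -> aff R n) x :
  (forall i, G (gs i)) -> row_free (transl_mx gs) -> row_free (disp_mx gs x).
Proof.
move=> Ggs free_gs; have [C C_unit dispC] := disp_linear x.
by rewrite (disp_mx_transl Ggs dispC) /row_free mxrankMfree // row_free_unit unitmx_tr.
Qed.

Lemma aff_comb_transl k (gs : 'I_k -> aff R n) g mu :
  (forall i, G (gs i)) -> G g -> g.2^T = mu *m transl_mx gs -> g = aff_comb gs mu.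
Proof.
move=> Ggs Gg g_mu; apply: act_inj => x; apply: (addIr (- x)); apply: trmx_inj.
have [C _ dispC] := disp_linear x.
by rewrite disp_mx_comb (disp_mx_transl Ggs dispC) mulmxA -g_mu dispC // trmx_mul.
Qed.

End CentralizerTransitive.

Section RationalCoefficients.
Variables (R : realType) (n k : nat) (gs : 'I_k -> aff R n).
Local Notation P := {mpoly R[n + n]}.
Implicit Types (z : 'I_(n + n) -> R) (x y : 'cV[R]_n).

Definition fst_pt z : 'cV[R]_n := \col_j z (lshift n j).
Definition snd_pt z : 'cV[R]_n := \col_j z (rshift n j).

Lemma fst_pt_pair y x : fst_pt (pair_coords y x) = y.
Proof. by apply/colP=> j; rewrite !mxE /pair_coords (unsplitK (inl _)). Qed.

Lemma snd_pt_pair y x : snd_pt (pair_coords y x) = x.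
Proof. by apply/colP=> j; rewrite !mxE /pair_coords (unsplitK (inr _)). Qed.

Definition comb_coef z : 'rV[R]_k :=
  let Q := disp_mx gs (snd_pt z) in
  (fst_pt z - snd_pt z)^T *m Q^T *m invmx (Q *m Q^T).

Definition Xfst : 'cV[P]_n := \col_j 'X_(lshift n j).
Definition Xsnd : 'cV[P]_n := \col_j 'X_(rshift n j).

Definition act_mpoly (g : aff R n) (X : 'cV[P]_n) : 'cV[P]_n :=
  map_mx (@mpolyC (n + n) R) g.1 *m X + map_mx (@mpolyC (n + n) R) g.2.

Definition disp_mpoly : 'M[P]_(k, n) := \matrix_l (act_mpoly (gs l) Xsnd - Xsnd)^T.

Definition coef_den : P := \det (disp_mpoly *m disp_mpoly^T).

Definition coef_num : 'rV[P]_k :=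
  (Xfst - Xsnd)^T *m disp_mpoly^T *m \adj (disp_mpoly *m disp_mpoly^T).

Lemma map_mx_mevalC z p q (A : 'M[R]_(p, q)) :
  map_mx (meval z) (map_mx (@mpolyC (n + n) R) A) = A.
Proof. by apply/matrixP=> i j; rewrite !mxE mevalC. Qed.

Lemma Xfst_eval z : map_mx (meval z) Xfst = fst_pt z.
Proof. by apply/colP=> j; rewrite !mxE mevalXU. Qed.

Lemma Xsnd_eval z : map_mx (meval z) Xsnd = snd_pt z.
Proof. by apply/colP=> j; rewrite !mxE mevalXU. Qed.

Lemma disp_mpoly_eval z : map_mx (meval z) disp_mpoly = disp_mx gs (snd_pt z).
Proof.
apply/row_matrixP => l; rewrite -map_row !rowK -map_trmx.
by rewrite /act_mpoly !raddfB raddfD /= map_mxM !map_mx_mevalC Xsnd_eval.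
Qed.

Lemma coef_den_eval z :
  coef_den.@[z] = \det (disp_mx gs (snd_pt z) *m (disp_mx gs (snd_pt z))^T).
Proof. by rewrite -det_map_mx map_mxM -map_trmx disp_mpoly_eval. Qed.

Lemma comb_coefE z l :
  disp_mx gs (snd_pt z) *m (disp_mx gs (snd_pt z))^T \in unitmx ->
  comb_coef z 0 l = (coef_num 0 l).@[z] / coef_den.@[z].
Proof.
move=> QQu.
have -> : (coef_num 0 l).@[z] = map_mx (meval z) coef_num 0 l by rewrite [RHS]mxE.
rewrite coef_den_eval /comb_coef /= /invmx QQu /coef_num.
rewrite !map_mxM map_mx_adj map_mxM -!map_trmx map_mxB.
by rewrite Xfst_eval Xsnd_eval disp_mpoly_eval -scalemxAr mxE mulrC.
Qed.

End RationalCoefficients.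

Lemma regular_on_affine_frac (R : realType) m (S : ('I_m -> R) -> Prop)
    (f : ('I_m -> R) -> R) (q : {mpoly R[m]}) k (L : 'I_k -> {mpoly R[m]})
    (c : R) (a : 'I_k -> R) :
  (forall z, S z -> q.@[z] != 0) ->
  (forall z, S z -> f z = c + \sum_l (L l).@[z] / q.@[z] * a l) ->
  regular_on S f.
Proof.
move=> q_neq0 fE; exists (c%:MP * q + \sum_l L l * (a l)%:MP), q => z Sz.
split; first exact: q_neq0.
rewrite fE // rmorphD rmorphM /= mevalC mulrDl mulfK ?q_neq0 // rmorph_sum mulr_suml.
by congr (_ + _); apply: eq_bigr => l _; rewrite rmorphM /= mevalC mulrAC.
Qed.

Theorem lemma6p1 (R : realType) (n s : nat) (G : aff R n -> Prop) :
  (s <= n)%N ->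
  is_subgroup_Iso s G ->
  zariski_closed G ->
  centralizer_transitive s G ->
  principal_action G.
Proof.
move=> _ _ _ cent_trans; split; first exact: centralizer_transitive_free cent_trans.
have [k [gs [Ggs free_gs span_gs]]] := translation_basis G.
have free_disp x : row_free (disp_mx gs x) := row_free_disp_mx cent_trans x Ggs free_gs.
have QQu z := row_free_mul_tr_unit (free_disp (snd_pt z)).
have den_neq0 z : (coef_den gs).@[z] != 0 by rewrite coef_den_eval -unitfE -unitmxE.
exists (fun z => aff_comb gs (comb_coef gs z)); split; [|split].
- move=> g x Gg; have [mu g_mu] := span_gs g Gg.
  have g_comb := aff_comb_transl cent_trans Ggs Gg g_mu.
  suff -> : comb_coef gs (pair_coords (act g x) x) = mu by [].
  rewrite /comb_coef /= fst_pt_pair snd_pt_pair {1}g_comb disp_mx_comb.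
  exact: least_squares_coef.
- move=> i j; apply: (regular_on_affine_frac (c := (i == j)%:R)
    (a := fun l => (gs l).1 i j - (i == j)%:R) (fun z _ => den_neq0 z)) => z _.
  by rewrite aff_comb1E; congr (_ + _); apply: eq_bigr => l _; rewrite comb_coefE.
- move=> i; apply: (regular_on_affine_frac (c := 0)
    (a := fun l => (gs l).2 i 0) (fun z _ => den_neq0 z)) => z _.
  by rewrite aff_comb2E add0r; apply: eq_bigr => l _; rewrite comb_coefE.
Qed.
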